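(* Let $(\lambda_n)_n$, $(\nu_n)_n$ and, for each $j\in\mathbb{N}$, $(\rho_{j,n})_n$ be sequences of positive numbers, and assume $\lambda_n/\nu_n\to0$ as $n\to\infty$. Then, after extraction of a subsequence in $n$, there exists a sequence $(\mu_n)_n$ of positive numbers such that $\lambda_n/\mu_n\to0$ and $\mu_n/\nu_n\to0$, and for every $k\in\mathbb{N}$, either $\mu_n/\rho_{k,n}\to0$ or $\rho_{k,n}/\mu_n\to0$. *)

From Stdlib Require Export Reals.
Open Scope R_scope.

Definition extraction (phi : nat -> nat) : Prop :=
  forall m n : nat, (m < n)%nat -> (phi m < phi n)%nat.

From Stdlib Require Import Reals Lra Lia ClassicalEpsilon ClassicalDescription.
Open Scope R_scope.

(* On the logarithmic scale D n = ln (nu n / lam n) tends to +oo; take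
   mu n = lam n * exp (s n * D n) with s n in [1/3, 2/3], so that lam/mu and mu/nu
   tend to 0. With q k n = ln (rho k n / lam n), the dichotomy for rho k follows once
   s n eventually stays on one fixed side of q k n / D n at a distance delta > 0.
   This comes from nested intervals: at step k the current interval is trisected
   around its midpoint c; if infinitely many indices of the current infinite index
   set satisfy q k n >= c * D n, keep them and the lower third, otherwise keep the
   remaining indices and the upper third. A diagonal extraction through the
   decreasing index sets, with s n the left end of the n-th interval, finishes. *)

Definition infinite (P : nat -> Prop) : Prop :=
  forall N, exists n, (N <= n)%nat /\ P n.

Lemma infinite_and_not (S P : nat -> Prop) :
  infinite S -> ~ infinite (fun n => S n /\ P n) -> infinite (fun n => S n /\ ~ P n).
Proof.
  intros HS HSP N.
  apply NNPP; intros Hnone; apply HSP; intros M.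
  destruct (HS (Nat.max N M)) as [n [Hn HSn]].
  exists n; split; [lia|]; split; [exact HSn|].
  apply NNPP; intros HPn; apply Hnone; exists n; repeat split; auto; lia.
Qed.

Section DiagonalExtraction.

Variable A : nat -> nat -> Prop.
Hypothesis A_infinite : forall k, infinite (A k).
Hypothesis A_decreasing : forall k n, A (S k) n -> A k n.

Definition pick (P : nat -> Prop) (N : nat) : nat :=
  epsilon (inhabits 0%nat) (fun n => (N <= n)%nat /\ P n).

Lemma pick_spec (P : nat -> Prop) (N : nat) :
  infinite P -> (N <= pick P N)%nat /\ P (pick P N).
Proof. intros HP; unfold pick; apply epsilon_spec, HP. Qed.

Fixpoint diagonal (n : nat) : nat :=
  match n with
  | O => pick (A 0) 0
  | S n => pick (A (S n)) (S (diagonal n))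
  end.

Lemma diagonal_lt_S (n : nat) : (diagonal n < diagonal (S n))%nat.
Proof. apply (pick_spec (A (S n))), A_infinite. Qed.

Lemma diagonal_extraction : extraction diagonal.
Proof.
  intros m n; induction 1; [apply diagonal_lt_S|].
  pose proof (diagonal_lt_S m0); lia.
Qed.

Lemma diagonal_ge (n : nat) : (n <= diagonal n)%nat.
Proof. induction n; [lia|]. pose proof (diagonal_lt_S n); lia. Qed.

Lemma A_antitone (k j n : nat) : (k <= j)%nat -> A j n -> A k n.
Proof. induction 1; auto. Qed.

Lemma diagonal_in (k n : nat) : (k <= n)%nat -> A k (diagonal n).
Proof.
  intros Hkn; apply (A_antitone _ _ _ Hkn).
  destruct n; apply (pick_spec _ _ (A_infinite _)).
Qed.

End DiagonalExtraction.

Section Trisection.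

Variables (D : nat -> R) (q : nat -> nat -> R).

Record stage := Stage { lo : R; hi : R; support : nat -> Prop }.

Definition refine (k : nat) (s : stage) : stage :=
  let c := (lo s + hi s) / 2 in
  let w := (hi s - lo s) / 3 in
  let above := fun n => support s n /\ c * D n <= q k n in
  if excluded_middle_informative (infinite above)
  then Stage (lo s) (lo s + w) above
  else Stage (hi s - w) (hi s) (fun n => support s n /\ ~ c * D n <= q k n).

Lemma refine_infinite (k : nat) (s : stage) :
  infinite (support s) -> infinite (support (refine k s)).
Proof.
  intros Hs; unfold refine.
  destruct (excluded_middle_informative _) as [Habove | Hnot]; simpl; auto.
  now apply infinite_and_not.
Qed.

Lemma refine_nested (k : nat) (s : stage) : lo s < hi s ->
  lo s <= lo (refine k s) /\ lo (refine k s) < hi (refine k s) /\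
  hi (refine k s) <= hi s /\ (forall n, support (refine k s) n -> support s n).
Proof.
  intros Hs; unfold refine.
  destruct (excluded_middle_informative _); simpl; repeat split; try lra; tauto.
Qed.

(* The kept third lies at distance (hi s - lo s) / 6 from the midpoint c. *)
Lemma refine_separates (k : nat) (s : stage) : lo s < hi s ->
  exists delta, 0 < delta /\
    ((forall n, support (refine k s) n -> (hi (refine k s) + delta) * D n <= q k n) \/
     (forall n, support (refine k s) n -> q k n <= (lo (refine k s) - delta) * D n)).
Proof.
  intros Hs; exists ((hi s - lo s) / 6); split; [lra|]; unfold refine.
  destruct (excluded_middle_informative _) as [_ | _]; simpl; [left | right].
  - intros n [_ Hn]; replace (lo s + (hi s - lo s) / 3 + (hi s - lo s) / 6)
      with ((lo s + hi s) / 2) by field; exact Hn.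
  - intros n [_ Hn]; replace (hi s - (hi s - lo s) / 3 - (hi s - lo s) / 6)
      with ((lo s + hi s) / 2) by field; lra.
Qed.

Fixpoint stage_at (k : nat) : stage :=
  match k with
  | O => Stage (1/3) (2/3) (fun _ => True)
  | S k => refine k (stage_at k)
  end.

Lemma stage_at_infinite (k : nat) : infinite (support (stage_at k)).
Proof.
  induction k; simpl; [|now apply refine_infinite].
  intros N; exists N; split; auto.
Qed.

Lemma stage_at_lo_lt_hi (k : nat) : lo (stage_at k) < hi (stage_at k).
Proof. induction k; simpl; [lra|]. now apply refine_nested. Qed.

Lemma stage_at_nested (k j : nat) : (k <= j)%nat ->
  lo (stage_at k) <= lo (stage_at j) /\ hi (stage_at j) <= hi (stage_at k) /\
  (forall n, support (stage_at j) n -> support (stage_at k) n).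
Proof.
  induction 1 as [|j _ [Hlo [Hhi Hsupp]]]; [repeat split; auto; lra|].
  destruct (refine_nested j _ (stage_at_lo_lt_hi j)) as [Hlo' [_ [Hhi' Hsupp']]].
  simpl; repeat split; auto; lra.
Qed.

Lemma stage_at_bounds (n : nat) : 1/3 <= lo (stage_at n) /\ hi (stage_at n) <= 2/3.
Proof.
  destruct (stage_at_nested _ _ (Nat.le_0_l n)) as [Hlo [Hhi _]].
  simpl in Hlo, Hhi; lra.
Qed.

Lemma stage_at_separates (k : nat) :
  exists delta, 0 < delta /\
    ((forall n, support (stage_at (S k)) n -> (hi (stage_at (S k)) + delta) * D n <= q k n) \/
     (forall n, support (stage_at (S k)) n -> q k n <= (lo (stage_at (S k)) - delta) * D n)).
Proof. apply refine_separates, stage_at_lo_lt_hi. Qed.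

Lemma separating_exponent :
  (exists N0, forall n, (N0 <= n)%nat -> 0 <= D n) ->
  exists (phi : nat -> nat) (s : nat -> R),
    extraction phi /\ (forall n, (n <= phi n)%nat) /\ (forall n, 1/3 <= s n <= 2/3) /\
    forall k, exists delta N, 0 < delta /\
      ((forall n, (N <= n)%nat -> (s n + delta) * D (phi n) <= q k (phi n)) \/
       (forall n, (N <= n)%nat -> q k (phi n) <= (s n - delta) * D (phi n))).
Proof.
  intros [N0 HD].
  set (A := fun k => support (stage_at k)).
  assert (HA : forall k, infinite (A k)) by apply stage_at_infinite.
  assert (HA_decr : forall k n, A (S k) n -> A k n).
  { intros k n; apply (refine_nested k _ (stage_at_lo_lt_hi k)). }
  exists (diagonal A), (fun n => lo (stage_at n)).
  split; [apply diagonal_extraction, HA|].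
  split; [apply diagonal_ge, HA|].
  split; [intros n; pose proof (stage_at_bounds n); pose proof (stage_at_lo_lt_hi n); lra|].
  intros k; destruct (stage_at_separates k) as [delta [Hdelta Hsep]].
  exists delta, (Nat.max N0 (S k)); split; [exact Hdelta|].
  assert (Hlate : forall n, (Nat.max N0 (S k) <= n)%nat ->
    0 <= D (diagonal A n) /\
    lo (stage_at (S k)) <= lo (stage_at n) <= hi (stage_at (S k)) /\
    support (stage_at (S k)) (diagonal A n)).
  { intros n Hn; destruct (stage_at_nested (S k) n ltac:(lia)) as [Hlo [Hhi _]].
    pose proof (stage_at_lo_lt_hi n); pose proof (diagonal_ge A HA n).
    repeat split; try lra; [apply HD; lia | apply (diagonal_in A HA HA_decr); lia]. }
  destruct Hsep as [Habove | Hbelow]; [left | right]; intros n Hn;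
    destruct (Hlate n Hn) as [HDn [Hs Hsupp]].
  - specialize (Habove _ Hsupp).
    assert (0 <= (hi (stage_at (S k)) - lo (stage_at n)) * D (diagonal A n))
      by (apply Rmult_le_pos; lra).
    lra.
  - specialize (Hbelow _ Hsupp).
    assert (0 <= (lo (stage_at n) - lo (stage_at (S k))) * D (diagonal A n))
      by (apply Rmult_le_pos; lra).
    lra.
Qed.

End Trisection.

Lemma ln_div (x y : R) : 0 < x -> 0 < y -> ln (x / y) = ln x - ln y.
Proof. intros Hx Hy; unfold Rdiv; rewrite ln_mult, ln_Rinv; auto with real. Qed.

Lemma cv_infty_log_ratio (x y : nat -> R) :
  (forall n, 0 < x n) -> (forall n, 0 < y n) ->
  Un_cv (fun n => x n / y n) 0 -> cv_infty (fun n => ln (y n) - ln (x n)).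
Proof.
  intros Hx Hy Hcv M.
  destruct (Hcv (exp (- M)) (exp_pos _)) as [N HN]; exists N; intros n Hn.
  specialize (HN n Hn); unfold R_dist in HN; rewrite Rminus_0_r in HN.
  assert (Hxy : 0 < x n / y n) by (apply Rdiv_lt_0_compat; auto).
  rewrite Rabs_right in HN by lra.
  apply ln_increasing in HN; [|exact Hxy].
  rewrite ln_exp, ln_div in HN by auto; lra.
Qed.

Lemma Un_cv_ratio_0 (x y : nat -> R) :
  (forall n, 0 < x n) -> (forall n, 0 < y n) ->
  cv_infty (fun n => ln (y n) - ln (x n)) -> Un_cv (fun n => x n / y n) 0.
Proof.
  intros Hx Hy Hinf eps Heps.
  destruct (Hinf (- ln eps)) as [N HN]; exists N; intros n Hn.
  specialize (HN n Hn); unfold R_dist; rewrite Rminus_0_r.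
  rewrite <- (exp_ln (x n / y n)) by (apply Rdiv_lt_0_compat; auto).
  rewrite Rabs_right by (left; apply exp_pos).
  rewrite <- (exp_ln eps Heps); apply exp_increasing.
  rewrite ln_div by auto; lra.
Qed.

Lemma cv_infty_subsequence (u : nat -> R) (phi : nat -> nat) :
  cv_infty u -> (forall n, (n <= phi n)%nat) -> cv_infty (fun n => u (phi n)).
Proof.
  intros Hu Hphi M; destruct (Hu M) as [N HN]; exists N; intros n Hn.
  apply HN; specialize (Hphi n); lia.
Qed.

Lemma Un_cv_ratio_0_of_log_gap (E x y : nat -> R) (delta : R) (N : nat) :
  cv_infty E -> 0 < delta -> (forall n, 0 < x n) -> (forall n, 0 < y n) ->
  (forall n, (N <= n)%nat -> delta * E n <= ln (y n) - ln (x n)) ->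
  Un_cv (fun n => x n / y n) 0.
Proof.
  intros HE Hdelta Hx Hy Hgap; apply Un_cv_ratio_0; auto; intros M.
  destruct (HE (M / delta)) as [N' HN']; exists (Nat.max N N'); intros n Hn.
  specialize (HN' n ltac:(lia)); specialize (Hgap n ltac:(lia)).
  apply Rmult_lt_compat_l with (r := delta) in HN'; [|exact Hdelta].
  replace (delta * (M / delta)) with M in HN' by (field; lra); lra.
Qed.

Theorem claimB1 (lam nu : nat -> R) (rho : nat -> nat -> R)
  (Hlam : forall n, 0 < lam n) (Hnu : forall n, 0 < nu n)
  (Hrho : forall j n, 0 < rho j n)
  (Hlim : Un_cv (fun n => lam n / nu n) 0) :
  exists (phi : nat -> nat) (mu : nat -> R),
    extraction phi /\
    (forall n, 0 < mu n) /\
    Un_cv (fun n => lam (phi n) / mu n) 0 /\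
    Un_cv (fun n => mu n / nu (phi n)) 0 /\
    (forall k : nat,
        Un_cv (fun n => mu n / rho k (phi n)) 0 \/
        Un_cv (fun n => rho k (phi n) / mu n) 0).
Proof.
  set (D := fun n => ln (nu n) - ln (lam n)).
  set (q := fun k n => ln (rho k n) - ln (lam n)).
  assert (HD : cv_infty D) by now apply cv_infty_log_ratio.
  destruct (separating_exponent D q) as (phi & s & Hphi & Hphi_ge & Hs & Hsep).
  { destruct (HD 0) as [N HN]; exists N; intros n Hn; left; auto. }
  assert (HDphi : cv_infty (fun n => D (phi n))) by now apply cv_infty_subsequence.
  destruct (HDphi 0) as [N0 HD0].
  set (mu := fun n => exp (ln (lam (phi n)) + s n * D (phi n))).
  assert (Hln_mu : forall n, ln (mu n) = ln (lam (phi n)) + s n * D (phi n))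
    by (intros; apply ln_exp).
  assert (Hmu : forall n, 0 < mu n) by (intros; apply exp_pos).
  exists phi, mu; split; [exact Hphi|]; split; [exact Hmu|].
  split; [|split; [|intros k]].
  - apply (Un_cv_ratio_0_of_log_gap _ _ _ (1/3) N0 HDphi); auto; try lra.
    intros n Hn; specialize (HD0 n Hn); specialize (Hs n); rewrite Hln_mu; nra.
  - apply (Un_cv_ratio_0_of_log_gap _ _ _ (1/3) N0 HDphi); auto; try lra.
    intros n Hn; specialize (HD0 n Hn); specialize (Hs n); rewrite Hln_mu.
    unfold D in *; nra.
  - destruct (Hsep k) as (delta & N & Hdelta & [Habove | Hbelow]); [left | right];
      apply (Un_cv_ratio_0_of_log_gap _ _ _ delta N HDphi); auto; intros n Hn;
      rewrite Hln_mu; unfold q in *; [specialize (Habove n Hn) | specialize (Hbelow n Hn)];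
      lra.
Qed.
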